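(* Let $m$ be a positive integer, $1\le i\le m$, and let $G(\mathbf{l})$ be a function of $\mathbf{l}=(l_1,\ldots,l_m)\in\mathbb{Z}^m$. Then, with $D_i$ acting on the variables $(k_1,\ldots,k_{m+1})$, \begin{multline*} D_i \sum_{l_{1}=k_{1}}^{k_{2}} \sum_{l_{2}=k_{2}}^{k_{3}} \cdots \sum_{l_{m}=k_{m}}^{k_{m+1}} G(l_{1},\ldots,l_{m}) \\ = - \frac{1}{2} \Bigg( \sum_{l_1=k_{1}}^{k_2} \cdots \sum_{l_{i-2}=k_{i-2}}^{k_{i-1}} \sum_{l_{i-1}=k_i+1}^{k_{i+1}+1} \sum_{l_{i}=k_i}^{k_{i+1}} \sum_{l_{i+1}=k_{i}-1}^{k_{i+2}} \sum_{l_{i+2}=k_{i+2}}^{k_{i+3}} \cdots \sum_{l_{m}=k_{m}}^{k_{m+1}} D_{i-1} G (\mathbf{l}) \\ + \sum_{l_1=k_{1}}^{k_2} \cdots \sum_{l_{i-2}=k_{i-2}}^{k_{i-1}} \sum_{l_{i-1}=k_{i-1}}^{k_{i}} \sum_{l_{i}=k_{i}}^{k_{i+1}} \sum_{l_{i+1}=k_{i}-1}^{k_{i+1}-1} \sum_{l_{i+2}=k_{i+2}}^{k_{i+3}} \cdots \sum_{l_{m}=k_{m}}^{k_{m+1}} D_{i} G (\mathbf{l}) \Bigg), \end{multline*} where by convention $D_0G(\mathbf{l})=0$ and $D_mG(\mathbf{l})=0$.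
   Context: For a function $H(k_1,\ldots,k_N)$ of $N$ integer variables and $1\le j\le N-1$, $D_jH(k_1,\ldots,k_N)=H(k_1,\ldots,k_N)+H(k_1,\ldots,k_{j-1},k_{j+1}+1,k_j-1,k_{j+2},\ldots,k_N)$. Sums use the convention: $\sum_{i=a}^bf(i)=f(a)+\cdots+f(b)$ if $a\le b$, $0$ if $b=a-1$, and $-f(b+1)-\cdots-f(a-1)$ if $b+1\le a-1$. *)

From mathcomp Require Import all_boot all_order all_algebra.
Set Implicit Arguments. Unset Strict Implicit. Unset Printing Implicit Defensive.
Import Order.TTheory GRing.Theory Num.Theory.
Local Open Scope ring_scope.

(* Signed sum convention: sum_{i=a}^b f(i) = f(a)+...+f(b) if a <= b,
   0 if b = a-1, and -f(b+1)-...-f(a-1) if b+1 <= a-1. *)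
Definition gsum (R : zmodType) (a b : int) (f : int -> R) : R :=
  if a <= b then \sum_(0 <= t < absz (b - a + 1)%R) f (a + t%:Z)
  else - \sum_(0 <= t < absz (a - b - 1)%R) f (b + 1 + t%:Z).

Fixpoint nsum (R : zmodType) (bs : seq (int * int)) (F : seq int -> R) : R :=
  match bs with
  | [::] => F [::]
  | (a, b) :: bs' => gsum a b (fun l => nsum bs' (fun s => F (l :: s)))
  end.

Definition vec (m : nat) (s : seq int) : {ffun 'I_m -> int} :=
  [ffun x : 'I_m => nth 0 s x].

(* 1-based coordinate k_j of k = (k_1,...,k_N) (0 if out of range). *)
Definition coord (N : nat) (k : {ffun 'I_N -> int}) (j : nat) : int :=
  odflt 0 (omap k (insub j.-1 : option 'I_N)).

Definition Dswap (N : nat) (j : nat) (k : {ffun 'I_N -> int}) :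
  {ffun 'I_N -> int} :=
  [ffun x : 'I_N => if (x.+1 == j)%N then coord k j.+1 + 1
                    else if (x.+1 == j.+1)%N then coord k j - 1 else k x].

(* D_j H(k) = H(k) + H(Dswap j k) for 1 <= j <= N-1; by convention D_j H = 0
   otherwise (this covers D_0 G = 0 and D_m G = 0 for G of m variables). *)
Definition D (R : zmodType) (N : nat) (j : nat)
  (H : {ffun 'I_N -> int} -> R) : {ffun 'I_N -> int} -> R :=
  fun k => if (0 < j < N)%N then H k + H (Dswap j k) else 0.

Definition bnd0 (N : nat) (k : {ffun 'I_N -> int}) (j : nat) : int * int :=
  (coord k j, coord k j.+1).

(* Bounds of the first sum on the right-hand side (the D_{i-1} term). *)
Definition bnd1 (N : nat) (k : {ffun 'I_N -> int}) (i j : nat) : int * int :=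
  if (j == i.-1)%N then (coord k i + 1, coord k i.+1 + 1)
  else if (j == i.+1)%N then (coord k i - 1, coord k i.+2)
  else bnd0 k j.

(* Bounds of the second sum on the right-hand side (the D_i term). *)
Definition bnd2 (N : nat) (k : {ffun 'I_N -> int}) (i j : nat) : int * int :=
  if (j == i.+1)%N then (coord k i - 1, coord k i.+1 - 1)
  else bnd0 k j.

(* Write b = k_i and c = k_(i+1).  Swapping them in the bounds changes the
   ranges of l_(i-1), l_i, l_(i+1) into [k_(i-1), c+1], [c+1, b-1] and
   [b-1, k_(i+2)].  Under the signed-sum convention a range can be split at any
   point, and reversed ([c+1, b-1] gives minus [b, c]), with no order condition
   on the bounds; splitting [k_(i-1), c+1] at b and [b-1, k_(i+2)] at c then
   shows that the two nested sums making up the left-hand side add up to minus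
   the sums of G itself over the bounds of the two right-hand terms.  Finally,
   summing D_(i-1) G (resp. D_i G) over those bounds gives twice the sum of G,
   because (l_(i-1), l_i) |-> (l_i + 1, l_(i-1) - 1) (resp. the same map on
   (l_i, l_(i+1))) maps the box [b+1, c+1] x [b, c] (resp. [b, c] x [b-1, c-1])
   onto itself. *)

From mathcomp Require Import all_boot all_order all_algebra.
From mathcomp Require Import zify ring.
Import Order.TTheory GRing.Theory Num.Theory.
Local Open Scope ring_scope.

Section SignedSum.
Variable R : zmodType.
Implicit Types (f g : int -> R) (a b c : int).

Lemma eq_gsum a b f g : f =1 g -> gsum a b f = gsum a b g.
Proof. by move=> fg; rewrite /gsum; case: ifP => _; [|congr (- _)]; apply: eq_bigr. Qed.

Lemma gsumD a b f g : gsum a b (fun x => f x + g x) = gsum a b f + gsum a b g.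
Proof. by rewrite /gsum; case: ifP => _; rewrite big_split // opprD. Qed.

Lemma gsum_nil b f : gsum (b + 1) b f = 0.
Proof.
rewrite /gsum ifF; last by lia.
by rewrite (_ : b + 1 - b - 1 = 0) ?big_geq ?oppr0 //; lia.
Qed.

Lemma gsum_recr a b f : gsum a (b + 1) f = gsum a b f + f (b + 1).
Proof.
have [->|a_neq] := eqVneq a (b + 1).
  rewrite gsum_nil add0r /gsum lexx (_ : b + 1 - (b + 1) + 1 = 1); last by lia.
  by rewrite big_nat1 addr0.
rewrite /gsum; case: (lerP a b) => [le_ab|lt_ba].
  rewrite ifT; last by lia.
  rewrite (_ : absz (b + 1 - a + 1) = (absz (b - a + 1)).+1); last by lia.
  by rewrite big_nat_recr //=; congr (_ + f _); lia.
rewrite ifF; last by lia.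
rewrite (_ : absz (a - b - 1)%R = (absz (a - (b + 1) - 1)%R).+1); last by lia.
rewrite big_nat_recl // addr0 (addrC (f _)) (opprD _ (f _)) subrK.
by congr (- _); apply: eq_bigr => t _; congr f; lia.
Qed.

Lemma gsum_split a b c f : gsum a b f + gsum (b + 1) c f = gsum a c f.
Proof.
rewrite -(subrK b c); elim/int_rect: (c - b) => [|n IH|n IH].
- by rewrite add0r gsum_nil addr0.
- by rewrite (_ : n.+1%:Z + b = n%:Z + b + 1) ?gsum_recr ?addrA ?IH //; lia.
- move: IH; rewrite (_ : - n%:Z + b = - n.+1%:Z + b + 1); last by lia.
  by rewrite !gsum_recr addrA => /addIr.
Qed.

Lemma gsum_rev b c f : gsum (c + 1) (b - 1) f = - gsum b c f.
Proof. by apply/eqP; rewrite -addr_eq0 addrC gsum_split -{1}(subrK 1 b) gsum_nil. Qed.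

Lemma gsum_shift a b s f : gsum (a + s) (b + s) f = gsum a b (fun x => f (x + s)).
Proof.
rewrite /gsum lerD2r (_ : b + s - (a + s) + 1 = b - a + 1); last by lia.
rewrite (_ : a + s - (b + s) - 1 = a - b - 1); last by lia.
by case: ifP => _; [|congr (- _)]; apply: eq_bigr => t _; congr f; lia.
Qed.

Lemma exchange_gsum a b c d (F : int -> int -> R) :
  gsum a b (fun x => gsum c d (F x)) = gsum c d (fun y => gsum a b (F^~ y)).
Proof.
rewrite /gsum; case: (a <= b); case: (c <= d);
  rewrite ?sumrN ?opprK; try congr (- _); exact: exchange_big.
Qed.

Lemma gsumN a b f : gsum a b (fun x => - f x) = - gsum a b f.
Proof. by rewrite /gsum; case: ifP => _; rewrite sumrN. Qed.

Lemma gsum0 a b : gsum a b (fun _ => 0 : R) = 0.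
Proof. by rewrite /gsum; case: ifP => _; rewrite big1 ?oppr0. Qed.

Lemma gsum_swap p q (h : int -> int -> R) :
  gsum (p + 1) (q + 1) (fun x => gsum p q (fun y => h (y + 1) (x - 1))) =
  gsum (p + 1) (q + 1) (fun x => gsum p q (h x)).
Proof.
rewrite exchange_gsum gsum_shift; apply: eq_gsum => y.
by rewrite gsum_shift; apply: eq_gsum => x; rewrite addrK.
Qed.

End SignedSum.

Section NestedSum.
Variable R : zmodType.
Implicit Types (bs : seq (int * int)) (F : seq int -> R).

Lemma eq_nsum bs F1 F2 :
  (forall s, size s = size bs -> F1 s = F2 s) -> nsum bs F1 = nsum bs F2.
Proof.
elim: bs F1 F2 => [|[a b] bs IH] F1 F2 eqF /=; first exact: eqF.
by apply: eq_gsum => x; apply: IH => s size_s; apply: eqF; rewrite /= size_s.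
Qed.

Lemma nsum_cat bs1 bs2 F :
  nsum (bs1 ++ bs2) F = nsum bs1 (fun s1 => nsum bs2 (fun s2 => F (s1 ++ s2))).
Proof. by elim: bs1 F => [|[a b] bs IH] F //=; apply: eq_gsum => x; apply: IH. Qed.

Lemma nsumD bs F1 F2 : nsum bs (fun s => F1 s + F2 s) = nsum bs F1 + nsum bs F2.
Proof.
elim: bs F1 F2 => [|[a b] bs IH] F1 F2 //=.
by rewrite -gsumD; apply: eq_gsum => x; apply: IH.
Qed.

Lemma nsumN bs F : nsum bs (fun s => - F s) = - nsum bs F.
Proof.
elim: bs F => [|[a b] bs IH] F //=.
by rewrite -gsumN; apply: eq_gsum => x; apply: IH.
Qed.

Lemma nsum0 bs : nsum bs (fun _ => 0 : R) = 0.
Proof.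
elim: bs => [|[a b] bs IH] //=.
by rewrite -[RHS](gsum0 R a b); apply: eq_gsum => x; exact: IH.
Qed.

End NestedSum.

Lemma coord_vec m (s : seq int) j : (0 < j <= m)%N -> coord (vec m s) j = nth 0 s j.-1.
Proof.
move=> j_in; rewrite /coord; case: insubP => [u _ val_u|] /=; first by rewrite ffunE val_u.
by rewrite -ltnS prednK; lia.
Qed.

Lemma coord_Dswap N i (k : {ffun 'I_N -> int}) j : (0 < j)%N -> (i < N)%N ->
  coord (Dswap i k) j =
  if j == i then coord k i.+1 + 1 else if j == i.+1 then coord k i - 1 else coord k j.
Proof.
move=> j_gt0 i_lt; rewrite {1 4}/coord; case: insubP => [u _ val_u|] /=.
  by rewrite ffunE val_u prednK.
by rewrite -ltnS prednK // => j_gt; rewrite !ifF //; lia.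
Qed.

Lemma Dswap_vec m j (s1 s3 : seq int) x y : (0 < j < m)%N -> size s1 = j.-1 ->
  Dswap j (vec m (s1 ++ x :: y :: s3)) = vec m (s1 ++ (y + 1) :: (x - 1) :: s3).
Proof.
case: j => [|j] //= j_lt size_s1; apply/ffunP => n.
rewrite !ffunE !coord_vec /= ?nth_cat ?size_s1; try lia.
have [n_lt|n_gt|->] := ltngtP n j.
- by rewrite !ifF //; lia.
- rewrite ifF; last by lia.
  case: eqP => [n_eq|n_neq]; first by rewrite (_ : n - j = 1)%N ?ltnn ?subnn //; lia.
  by have [t ->] : exists t, (n - j = t.+2)%N by exists (n - j).-2; lia.
- by rewrite eqxx ifF ?subSnn ?subnn //; lia.
Qed.

Local Notation window m beta := [seq beta n | n <- iota 1 m].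

Section Window.
Variables (R : zmodType) (m : nat).
Implicit Types (beta : nat -> int * int) (F : seq int -> R).

Lemma nsum_focus beta j F : (0 < j <= m)%N ->
  nsum (window m beta) F =
  nsum [seq beta n | n <- iota 1 j.-1] (fun s1 =>
    gsum (beta j).1 (beta j).2 (fun x =>
      nsum [seq beta n | n <- iota j.+1 (m - j)] (fun s3 => F (s1 ++ x :: s3)))).
Proof.
move=> j_in; have -> : iota 1 m = iota 1 j.-1 ++ j :: iota j.+1 (m - j).
  rewrite -[in LHS](subnKC (_ : j.-1 <= m)%N) ?iotaD ?add1n ?prednK; try lia.
  by rewrite (_ : m - j.-1 = (m - j).+1)%N //; lia.
by rewrite map_cat nsum_cat; apply: eq_nsum => s1 _ /=; case: (beta j).
Qed.

Lemma nsum_focus_upd beta j a b F : (0 < j <= m)%N ->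
  nsum (window m [eta beta with j |-> (a, b)]) F =
  nsum [seq beta n | n <- iota 1 j.-1] (fun s1 =>
    gsum a b (fun x =>
      nsum [seq beta n | n <- iota j.+1 (m - j)] (fun s3 => F (s1 ++ x :: s3)))).
Proof.
move=> j_in; rewrite (nsum_focus _ _ _ j_in) /= eqxx.
have off_j n0 len : (n0 > j)%N || (n0 + len <= j)%N ->
    [seq [eta beta with j |-> (a, b)] n | n <- iota n0 len] =
    [seq beta n | n <- iota n0 len].
  by move=> far; apply/eq_in_map => n; rewrite mem_iota /= => n_in; rewrite ifF //; lia.
by rewrite !off_j //; lia.
Qed.

Lemma nsum_window_split beta j a b c F : (0 < j <= m)%N ->
  nsum (window m [eta beta with j |-> (a, c)]) F =
  nsum (window m [eta beta with j |-> (a, b)]) F +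
  nsum (window m [eta beta with j |-> (b + 1, c)]) F.
Proof.
move=> j_in; rewrite !nsum_focus_upd // -nsumD.
by apply: eq_nsum => s1 _; rewrite gsum_split.
Qed.

Lemma nsum_window_rev beta j b c F : (0 < j <= m)%N ->
  nsum (window m [eta beta with j |-> (c + 1, b - 1)]) F =
  - nsum (window m [eta beta with j |-> (b, c)]) F.
Proof.
move=> j_in; rewrite !nsum_focus_upd // -nsumN.
by apply: eq_nsum => s1 _; rewrite gsum_rev.
Qed.

Lemma nsum_window_Dswap beta j p q (G : {ffun 'I_m -> int} -> R) :
  (0 < j < m)%N -> beta j = (p + 1, q + 1) -> beta j.+1 = (p, q) ->
  nsum (window m beta) (fun s => G (Dswap j (vec m s))) =
  nsum (window m beta) (fun s => G (vec m s)).
Proof.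
move=> j_in beta_j beta_j1; have j_le : (0 < j <= m)%N by lia.
rewrite !(nsum_focus _ _ _ j_le) beta_j.
have -> : iota j.+1 (m - j) = j.+1 :: iota j.+2 (m - j.+1) by rewrite -subnSK //; lia.
apply: eq_nsum => s1; rewrite size_map size_iota => size_s1 /=; rewrite beta_j1.
rewrite -[RHS]gsum_swap; apply: eq_gsum => x; apply: eq_gsum => y.
by apply: eq_nsum => s3 _; rewrite Dswap_vec.
Qed.

End Window.

Ltac window_ext :=
  apply/eq_in_map => n; rewrite mem_iota => /andP[n_gt0 n_le] /=;
  rewrite /bnd1 /bnd2 /bnd0 ?coord_Dswap //; try lia;
  repeat case: eqP => ?; try (exfalso; lia); rewrite ?subrK; repeat f_equal; lia.

Section DswapOfNestedSum.
Variables (R : zmodType) (m i : nat) (k : {ffun 'I_m.+1 -> int}).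
Hypotheses (i_gt0 : (0 < i)%N) (i_le_m : (i <= m)%N).

(* For i = 1 (resp. i = m) the update at position i.-1 = 0 (resp. i.+1 = m.+1)
   lies outside the window 1..m and has no effect. *)
Let betaM := [eta bnd0 k with i.+1 |-> (coord k i - 1, coord k i.+2)].
Let betaL := [eta betaM with i.-1 |-> (coord k i.-1, coord k i.+1 + 1)].

Lemma nsum_bnd0_Dswap (F : seq int -> R) :
  nsum (window m (bnd0 (Dswap i k))) F = - nsum (window m betaL) F.
Proof.
transitivity (nsum (window m [eta betaL with i |-> (coord k i.+1 + 1, coord k i - 1)]) F).
  by congr nsum; window_ext.
by rewrite nsum_window_rev; [congr (- nsum _ _); window_ext | lia].
Qed.

Lemma nsum_betaL_split (F : seq int -> R) :
  nsum (window m betaL) F =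
  nsum (window m betaM) F + if (1 < i)%N then nsum (window m (bnd1 k i)) F else 0.
Proof.
case: ifP => [i_gt1|i_le1]; last by rewrite addr0; congr nsum; window_ext.
rewrite (nsum_window_split _ _ _ _ _ (coord k i)); last by lia.
by congr (nsum _ _ + nsum _ _); window_ext.
Qed.

Lemma nsum_betaM_split (F : seq int -> R) :
  nsum (window m betaM) F =
  nsum (window m (bnd0 k)) F + if (i < m)%N then nsum (window m (bnd2 k i)) F else 0.
Proof.
case: ifP => [i_lt_m|i_ge_m]; last by rewrite addr0; congr nsum; window_ext.
rewrite (nsum_window_split _ _ _ _ _ (coord k i.+1 - 1)); last by lia.
by rewrite addrC; congr (nsum _ _ + nsum _ _); window_ext.
Qed.

Lemma nsum_bnd0_addDswap (F : seq int -> R) :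
  nsum (window m (bnd0 k)) F + nsum (window m (bnd0 (Dswap i k))) F =
  - ((if (1 < i)%N then nsum (window m (bnd1 k i)) F else 0) +
     (if (i < m)%N then nsum (window m (bnd2 k i)) F else 0)).
Proof.
by rewrite nsum_bnd0_Dswap nsum_betaL_split nsum_betaM_split -addrA opprD addNKr addrC.
Qed.

Variable G : {ffun 'I_m -> int} -> R.

Lemma nsum_bnd1_D :
  nsum (window m (bnd1 k i)) (fun s => D i.-1 G (vec m s)) =
  (if (1 < i)%N then nsum (window m (bnd1 k i)) (fun s => G (vec m s)) else 0) *+ 2.
Proof.
rewrite /D; case: ifP => [i_gt1|i_le1].
  rewrite (_ : (0 < i.-1 < m)%N = true); last by lia.
  rewrite nsumD (nsum_window_Dswap _ _ _ i.-1 (coord k i) (coord k i.+1)) //; try lia.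
  - by rewrite /bnd1 eqxx.
  - by rewrite prednK // /bnd1 !ifF //; lia.
by rewrite (_ : (0 < i.-1 < m)%N = false) /= ?nsum0 ?mul0rn //; lia.
Qed.

Lemma nsum_bnd2_D :
  nsum (window m (bnd2 k i)) (fun s => D i G (vec m s)) =
  (if (i < m)%N then nsum (window m (bnd2 k i)) (fun s => G (vec m s)) else 0) *+ 2.
Proof.
rewrite /D i_gt0; case: ifP => [i_lt_m|i_ge_m]; last by rewrite nsum0 mul0rn.
rewrite nsumD (nsum_window_Dswap _ _ _ i (coord k i - 1) (coord k i.+1 - 1)) //; try lia.
- by rewrite /bnd2 ifF ?subrK //; lia.
- by rewrite /bnd2 eqxx.
Qed.

End DswapOfNestedSum.

Theorem lemma11 (R : numFieldType) (m i : nat)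
  (G : {ffun 'I_m -> int} -> R) (k : {ffun 'I_m.+1 -> int}) :
  (0 < m)%N -> (1 <= i <= m)%N ->
  D i (fun k' : {ffun 'I_m.+1 -> int} =>
         nsum [seq bnd0 k' j | j <- iota 1 m] (fun s => G (vec m s))) k =
  - 2^-1 * ( nsum [seq bnd1 k i j | j <- iota 1 m] (fun s => D i.-1 G (vec m s))
           + nsum [seq bnd2 k i j | j <- iota 1 m] (fun s => D i G (vec m s)) ).
Proof.
move=> _ /andP[i_gt0 i_le_m].
rewrite nsum_bnd1_D // nsum_bnd2_D // {1}/D i_gt0 ltnS i_le_m /=.
by rewrite nsum_bnd0_addDswap // -mulrnDl; move: (_ + _) => S; field.
Qed.
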